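(* Consider the $T$-round online first-price auction problem and the AR-OMD policy described in the context, with a suitable choice of its learning rate $\eta>0$ and grid precision $\epsilon$ (depending only on $T$), and assume the switching budget satisfies $L_T=o(T)$ and is unknown to the learner. Then \[ \sup_{(v_t,m_t)_{t=1}^T\in\mathcal{L}}\mathbb{E}[\mathrm{DR}_T(\pi)]=\tilde{O}(L_T). \]
   Context: Online first-price auction over $T$ rounds: at each round $t$ the learner observes a private value $v_t\in[0,1]$, submits a bid $b_t\in[0,1]$ (possibly randomized, depending only on past $(v_s,m_s)_{s<t}$ and $v_t$), then observes $m_t\in[0,1]$, the highest bid of the other bidders, and receives reward $r(b_t;v_t,m_t)$ with $r(b;v,m)\coloneqq(v-b)\mathbbm{1}(b\ge m)$. The expected dynamic regret is $\mathbb{E}[\mathrm{DR}_T(\pi)]\coloneqq\sum_{t=1}^T\max\{v_t-m_t,0\}-\sum_{t=1}^T\mathbb{E}[r(b_t;v_t,m_t)]$. For $L_T\ge0$, $\mathcal{L}\coloneqq\{(v_t,m_t)_{t=1}^T\in[0,1]^{2T}:\sum_{t=2}^T\mathbbm{1}(m_t\ne m_{t-1})\le L_T\}$. $\tilde{O}(\cdot)$ hides polylogarithmic factors in $T$. AR-OMD policy: there are $N=1/\epsilon$ experts, expert $i$ bidding $\min\{v_t,i\epsilon\}$ with reward $r_{t,i}\coloneqq r(\min\{v_t,i\epsilon\};v_t,m_t)$. Time is split into consecutive batches; a new batch begins at round $t+1$ whenever at a round $t$ which is not the first round of its batch one observes $m_t\ne m_{t-1}$. In round $t$ of a batch starting at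 round $t_0$, the learner bids $\min\{v_t,i\epsilon\}$ with probability $p_{t,i}\propto\exp\left(\eta\left(\sum_{s=t_0}^{t-1}r_{s,i}+o_{t,i}\right)\right)$, where the optimism is $o_{t,i}\coloneqq r(\min\{v_t,i\epsilon\};v_t,m_{t-1})$ (with $m_0\in[0,1]$ an arbitrary fixed value). This is optimistic mirror descent on the probability simplex with negative-entropy regularizer $\frac1\eta\sum_ip_i\ln p_i$, restarted at each batch. *)

From Stdlib Require Import Reals.
Open Scope R_scope.

(* sum_{j=1}^{n} f j *)
Fixpoint rsum (f : nat -> R) (n : nat) : R :=
  match n with O => 0 | S k => rsum f k + f (S k) end.

(* sum_{j=0}^{n-1} f (a + j), i.e. sum_{s=a}^{a+n-1} f s *)
Fixpoint rsum_from (f : nat -> R) (a n : nat) : R :=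
  match n with O => 0 | S k => rsum_from f a k + f (a + k)%nat end.

Definition reward (b v m : R) : R := if Rle_dec m b then v - b else 0.

(* bid of expert i with grid precision eps = 1/N : min{v, i eps} *)
Definition expert_bid (N i : nat) (v : R) : R := Rmin v (INR i / INR N).

Definition switches (m : nat -> R) (T : nat) : nat :=
  (fix sw (t : nat) : nat :=
     match t with
     | O => O
     | S O => O
     | S (S k as t') => (sw t' + (if Req_EM_T (m t) (m t') then 0 else 1))%nat
     end) T.

(* First round of the batch containing round t (rounds start at 1):
   start(1) = 1; a new batch begins at t'+1 iff round t' is not the first
   of its batch and m_{t'} <> m_{t'-1}. *)
Fixpoint batch_start (m : nat -> R) (t : nat) : nat :=
  match t with
  | O => 1%nat
  | S t' =>
      match t' with
      | O => 1%nat
      | S k =>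
          let s := batch_start m t' in
          if andb (Nat.ltb s t') (if Req_EM_T (m t') (m k) then false else true)
          then t else s
      end
  end.

Definition mprev (m0 : R) (m : nat -> R) (t : nat) : R :=
  if Nat.eqb t 1 then m0 else m (t - 1)%nat.

Definition expert_reward (N : nat) (v m : nat -> R) (s i : nat) : R :=
  reward (expert_bid N i (v s)) (v s) (m s).

Definition aromd_weight (eta : R) (N : nat) (m0 : R) (v m : nat -> R)
    (t i : nat) : R :=
  let t0 := batch_start m t in
  exp (eta * (rsum_from (fun s => expert_reward N v m s i) t0 (t - t0)
              + reward (expert_bid N i (v t)) (v t) (mprev m0 m t))).

Definition aromd_prob (eta : R) (N : nat) (m0 : R) (v m : nat -> R)
    (t i : nat) : R :=
  aromd_weight eta N m0 v m t i / rsum (aromd_weight eta N m0 v m t) N.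

Definition aromd_exp_reward (eta : R) (N : nat) (m0 : R) (v m : nat -> R)
    (t : nat) : R :=
  rsum (fun i => aromd_prob eta N m0 v m t i * expert_reward N v m t i) N.

Definition aromd_expected_DR (eta : R) (N : nat) (m0 : R) (v m : nat -> R)
    (T : nat) : R :=
  rsum (fun t => Rmax (v t - m t) 0 - aromd_exp_reward eta N m0 v m t) T.

From Stdlib Require Import Reals Lra Lia.
Open Scope R_scope.

(* Within a batch the highest competing bid is constant, so the optimistic hint m_{t-1} is exact
   except on the rounds right after a switch.  With an exact hint, AR-OMD earns at least the
   increase of the potential (1/eta) ln sum_i exp(eta * cumulative batch reward of i) (Jensen),
   and a mis-hinted round costs at most 1.  The final potential of a batch dominates the reward
   of the grid expert just above the batch's constant highest bid, which loses at most 1/N per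
   round against max(v_t - m_t, 0).  Hence each batch costs ln N / eta + (length)/N plus O(1) per
   mis-hinted round, and there are at most 1 + L_T batches and mis-hinted rounds.  With
   eta = N = T + 1 the regret is at most 5 (L_T + 1). *)

Lemma ln_le_sub_1 x : 0 < x -> ln x <= x - 1.
Proof.
  intros x_pos. pose proof (exp_ineq1_le (ln x)) as h.
  rewrite exp_ln in h by exact x_pos. lra.
Qed.

Lemma ln_le x y : 0 < x -> x <= y -> ln x <= ln y.
Proof.
  intros x_pos [lt | ->]; [left; now apply ln_increasing | now right].
Qed.

Lemma exp_le x y : x <= y -> exp x <= exp y.
Proof. intros [lt | ->]; [left; now apply exp_increasing | now right]. Qed.

Lemma Rdiv_le_compat_r a b c : 0 < c -> a <= b -> a / c <= b / c.
Proof.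
  intros c_pos ab. apply Rmult_le_compat_r; [left; now apply Rinv_0_lt_compat | exact ab].
Qed.

Lemma Rdiv_le_1 a b : 0 < b -> a <= b -> a / b <= 1.
Proof.
  intros b_pos ab. replace 1 with (b / b) by (field; lra). now apply Rdiv_le_compat_r.
Qed.

Lemma rsum_ext f g n :
  (forall i, (1 <= i <= n)%nat -> f i = g i) -> rsum f n = rsum g n.
Proof.
  induction n as [|n IH]; intros fg; simpl; [reflexivity|].
  rewrite IH, fg; [reflexivity | lia | intros; apply fg; lia].
Qed.

Lemma rsum_le f g n :
  (forall i, (1 <= i <= n)%nat -> f i <= g i) -> rsum f n <= rsum g n.
Proof.
  induction n as [|n IH]; intros fg; simpl; [lra|].
  apply Rplus_le_compat; [apply IH; intros; apply fg | apply fg]; lia.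
Qed.

Lemma rsum_lin a b f g n :
  rsum (fun i => a * f i + b * g i) n = a * rsum f n + b * rsum g n.
Proof. induction n as [|n IH]; simpl; [ring | rewrite IH; ring]. Qed.

Lemma rsum_scal a f n : rsum (fun i => a * f i) n = a * rsum f n.
Proof. induction n as [|n IH]; simpl; [ring | rewrite IH; ring]. Qed.

Lemma rsum_const c n : rsum (fun _ => c) n = c * INR n.
Proof. induction n as [|n IH]; [simpl; ring | rewrite S_INR; simpl; rewrite IH; ring]. Qed.

Lemma rsum_nonneg f n : (forall i, 0 <= f i) -> 0 <= rsum f n.
Proof.
  intros f_ge0. induction n as [|n IH]; simpl; [lra|]. specialize (f_ge0 (S n)). lra.
Qed.

Lemma rsum_pos f n : (1 <= n)%nat -> (forall i, 0 < f i) -> 0 < rsum f n.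
Proof.
  intros n_pos f_pos. destruct n as [|n]; [lia|]. simpl.
  pose proof (rsum_nonneg f n (fun i => Rlt_le _ _ (f_pos i))). specialize (f_pos (S n)). lra.
Qed.

Lemma rsum_ge_term f n i :
  (forall j, 0 <= f j) -> (1 <= i <= n)%nat -> f i <= rsum f n.
Proof.
  intros f_ge0. induction n as [|n IH]; intros hi; simpl; [lia|].
  pose proof (rsum_nonneg f n f_ge0). pose proof (f_ge0 (S n)).
  destruct (Nat.eq_dec i (S n)) as [-> | ne]; [lra|].
  assert (f i <= rsum f n) by (apply IH; lia). lra.
Qed.

Lemma rsum_from_le f g a n :
  (forall s, (a <= s < a + n)%nat -> f s <= g s) -> rsum_from f a n <= rsum_from g a n.
Proof.
  induction n as [|n IH]; intros fg; simpl; [lra|].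
  apply Rplus_le_compat; [apply IH; intros; apply fg | apply fg]; lia.
Qed.

Lemma rsum_from_extend f a t :
  (a <= t)%nat -> rsum_from f a (S t - a) = rsum_from f a (t - a) + f t.
Proof.
  intros le_at. replace (S t - a)%nat with (S (t - a)) by lia. simpl.
  replace (a + (t - a))%nat with t by lia. reflexivity.
Qed.

Definition log_sum_exp (eta : R) (x : nat -> R) (N : nat) : R :=
  ln (rsum (fun i => exp (eta * x i)) N) / eta.

Section LogSumExp.
Variables (eta : R) (N : nat).
Hypothesis eta_pos : 0 < eta.
Hypothesis N_pos : (1 <= N)%nat.

Lemma rsum_exp_pos x : 0 < rsum (fun i => exp (eta * x i)) N.
Proof. apply rsum_pos; [exact N_pos | intros; apply exp_pos]. Qed.

Lemma log_sum_exp0 : log_sum_exp eta (fun _ => 0) N = ln (INR N) / eta.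
Proof.
  unfold log_sum_exp. rewrite (rsum_ext _ (fun _ => 1)), rsum_const, Rmult_1_l; [reflexivity|].
  intros. rewrite Rmult_0_r. apply exp_0.
Qed.

Lemma log_sum_exp_ge x i : (1 <= i <= N)%nat -> x i <= log_sum_exp eta x N.
Proof.
  intros hi. unfold log_sum_exp.
  assert (term : exp (eta * x i) <= rsum (fun j => exp (eta * x j)) N).
  { apply (rsum_ge_term (fun j => exp (eta * x j))); [intros; left; apply exp_pos | exact hi]. }
  apply ln_le in term; [|apply exp_pos]. rewrite ln_exp in term.
  replace (x i) with (eta * x i / eta) by (field; lra).
  now apply Rdiv_le_compat_r.
Qed.

Lemma log_sum_exp_shift_le x y c :
  (forall i, y i <= c) ->
  log_sum_exp eta (fun i => x i + y i) N <= log_sum_exp eta x N + c.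
Proof.
  intros y_le. unfold log_sum_exp.
  assert (sum_le : rsum (fun i => exp (eta * (x i + y i))) N
                   <= exp (eta * c) * rsum (fun i => exp (eta * x i)) N).
  { rewrite <- rsum_scal. apply rsum_le. intros i _. rewrite <- exp_plus.
    apply exp_le. specialize (y_le i). nra. }
  apply (ln_le _ _ (rsum_exp_pos (fun i => x i + y i))) in sum_le.
  rewrite ln_mult, ln_exp in sum_le by (apply exp_pos || apply rsum_exp_pos).
  replace (ln (rsum (fun i => exp (eta * x i)) N) / eta + c)
    with ((eta * c + ln (rsum (fun i => exp (eta * x i)) N)) / eta) by (field; lra).
  now apply Rdiv_le_compat_r.
Qed.

(* Jensen's inequality for [ln], from the tangent bound [ln q <= q - 1]. *)
Lemma log_sum_exp_shift_le_mean x y :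
  log_sum_exp eta (fun i => x i + y i) N - log_sum_exp eta x N <=
  rsum (fun i => exp (eta * (x i + y i)) / rsum (fun j => exp (eta * (x j + y j))) N * y i) N.
Proof.
  unfold log_sum_exp.
  pose proof (rsum_exp_pos (fun i => x i + y i)) as Z_pos.
  pose proof (rsum_exp_pos x) as U_pos.
  set (Z := rsum (fun j => exp (eta * (x j + y j))) N) in *.
  set (U := rsum (fun j => exp (eta * x j)) N) in *.
  assert (tangent : forall i,
    (ln Z - ln U) * (/ Z * exp (eta * (x i + y i)))
      + - eta * (exp (eta * (x i + y i)) / Z * y i)
    <= / U * exp (eta * x i) + - / Z * exp (eta * (x i + y i))).
  { intros i.
    set (q := exp (- (eta * y i)) * (Z * / U)).
    assert (q_pos : 0 < q).
    { apply Rmult_lt_0_compat; [apply exp_pos |].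
      apply Rmult_lt_0_compat; [exact Z_pos | now apply Rinv_0_lt_compat]. }
    assert (ln_q : ln q = - (eta * y i) + (ln Z - ln U)).
    { unfold q. rewrite !ln_mult, ln_exp, ln_Rinv; try ring; try apply exp_pos;
        try apply Rmult_lt_0_compat; try apply Rinv_0_lt_compat; assumption. }
    assert (shift : exp (eta * (x i + y i)) * exp (- (eta * y i)) = exp (eta * x i)).
    { rewrite <- exp_plus. f_equal. ring. }
    pose proof (ln_le_sub_1 q q_pos) as h. rewrite ln_q in h.
    apply (Rmult_le_compat_l (exp (eta * (x i + y i)) / Z)) in h;
      [| left; apply Rdiv_lt_0_compat; [apply exp_pos | exact Z_pos]].
    replace (/ U * exp (eta * x i) + - / Z * exp (eta * (x i + y i)))
      with (exp (eta * (x i + y i)) / Z * (q - 1))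
      by (unfold q; rewrite <- shift; field; lra).
    lra. }
  pose proof (rsum_le _ _ N (fun i _ => tangent i)) as summed.
  rewrite !rsum_lin, !rsum_scal in summed. fold Z U in summed.
  replace (- / Z * Z) with (-1) in summed by (field; lra).
  rewrite !Rinv_l in summed by lra.
  replace (ln Z / eta - ln U / eta) with ((ln Z - ln U) / eta) by (field; lra).
  replace (rsum (fun i => exp (eta * (x i + y i)) / Z * y i) N)
    with (eta * rsum (fun i => exp (eta * (x i + y i)) / Z * y i) N / eta) by (field; lra).
  apply Rdiv_le_compat_r; lra.
Qed.

End LogSumExp.

Lemma nat_ceil_exists n y :
  0 <= y <= INR (S n) -> exists i, (1 <= i <= S n)%nat /\ y <= INR i <= y + 1.
Proof.
  induction n as [|n IH]; intros hy.
  - exists 1%nat. simpl in *. split; [lia | lra].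
  - destruct (Rle_dec y (INR (S n))) as [le | gt].
    + destruct (IH (conj (proj1 hy) le)) as [i [hi hyi]]. exists i. split; [lia | exact hyi].
    + apply Rnot_le_lt in gt. exists (S (S n)). rewrite (S_INR (S n)) in *. split; [lia | lra].
Qed.

Lemma grid_point_above N x :
  (1 <= N)%nat -> 0 <= x <= 1 ->
  exists i, (1 <= i <= N)%nat /\ x <= INR i / INR N <= x + / INR N.
Proof.
  intros N_pos hx. destruct N as [|n]; [lia|].
  pose proof (lt_0_INR (S n) ltac:(lia)) as N_gt0.
  destruct (nat_ceil_exists n (x * INR (S n))) as [i [hi hxi]]; [split; nra|].
  exists i. split; [exact hi|].
  replace x with (x * INR (S n) / INR (S n)) by (field; lra).
  replace (x * INR (S n) / INR (S n) + / INR (S n)) with ((x * INR (S n) + 1) / INR (S n))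
    by (field; lra).
  split; apply Rdiv_le_compat_r; lra.
Qed.

Lemma reward_nonneg b v m : b <= v -> 0 <= reward b v m.
Proof. intros. unfold reward. destruct Rle_dec; lra. Qed.

Lemma reward_min_le v m b : 0 <= b -> reward (Rmin v b) v m <= Rmax v 0.
Proof.
  intros. unfold reward, Rmin, Rmax. repeat destruct Rle_dec; lra.
Qed.

Lemma best_sub_le_reward_min v m b d :
  m <= b <= m + d -> Rmax (v - m) 0 - d <= reward (Rmin v b) v m.
Proof.
  intros. unfold reward, Rmin, Rmax. repeat destruct Rle_dec; lra.
Qed.

Lemma expert_reward_nonneg N v m s i : 0 <= expert_reward N v m s i.
Proof. apply reward_nonneg, Rmin_l. Qed.

Lemma expert_reward_le_1 N v m s i : v s <= 1 -> expert_reward N v m s i <= 1.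
Proof.
  intros v_le. unfold expert_reward, expert_bid.
  eapply Rle_trans; [apply reward_min_le | apply Rmax_lub; lra].
  unfold Rdiv. apply Rmult_le_pos; [apply pos_INR |].
  destruct N as [|n]; [change (INR 0) with 0; rewrite Rinv_0; lra |].
  left. apply Rinv_0_lt_compat, lt_0_INR. lia.
Qed.

Lemma batch_start_SS m k :
  (batch_start m (S (S k)) = S (S k) /\ (batch_start m (S k) < S k)%nat /\ m (S k) <> m k)
  \/ (batch_start m (S (S k)) = batch_start m (S k)
      /\ ((S k <= batch_start m (S k))%nat \/ m (S k) = m k)).
Proof.
  change (batch_start m (S (S k))) with
    (if andb (Nat.ltb (batch_start m (S k)) (S k))
             (if Req_EM_T (m (S k)) (m k) then false else true)
     then S (S k) else batch_start m (S k)).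
  destruct (Nat.ltb_spec (batch_start m (S k)) (S k));
    destruct (Req_EM_T (m (S k)) (m k)); simpl; auto.
Qed.

Lemma batch_start_spec m t :
  (1 <= t)%nat ->
  (1 <= batch_start m t <= t)%nat
  /\ forall s, (batch_start m t <= s < t)%nat -> m s = m (batch_start m t).
Proof.
  induction t as [|t IH]; intros t_pos; [lia|].
  destruct t as [|k]; [split; [simpl; lia | simpl; lia]|].
  destruct (IH ltac:(lia)) as [bounds const].
  destruct (batch_start_SS m k) as [[-> _] | [-> cont]]; [split; lia|].
  split; [lia|]. intros s hs.
  destruct (Nat.eq_dec s (S k)) as [-> | ne]; [|apply const; lia].
  destruct (Nat.eq_dec (batch_start m (S k)) (S k)) as [e | ne'].
  - now rewrite e.
  - destruct cont as [ge | same]; [lia|]. rewrite same. apply const. lia.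
Qed.

Lemma switches_SS m k :
  switches m (S (S k))
  = (switches m (S k) + if Req_EM_T (m (S (S k))) (m (S k)) then 0 else 1)%nat.
Proof. reflexivity. Qed.

Lemma switches_le_S m t : (switches m t <= switches m (S t))%nat.
Proof. destruct t as [|k]; [simpl; lia | rewrite switches_SS; lia]. Qed.

Lemma switches_pred_le m t : (switches m (pred t) <= switches m t)%nat.
Proof. destruct t as [|t]; [apply le_n | apply switches_le_S]. Qed.

Lemma new_batch_switch m k :
  (batch_start m (S k) < S k)%nat -> m (S k) <> m k ->
  (S (switches m k) <= switches m (S k))%nat.
Proof.
  intros lt ne. destruct k as [|j]; [simpl in lt; lia|].
  rewrite switches_SS. destruct Req_EM_T; [contradiction | lia].
Qed.

Section AROMD.
Variables (eta : R) (N : nat) (m0 : R) (v m : nat -> R) (T : nat).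
Hypothesis eta_pos : 0 < eta.
Hypothesis N_pos : (1 <= N)%nat.
Hypothesis inputs_unit : forall t, (1 <= t <= T)%nat -> 0 <= v t <= 1 /\ 0 <= m t <= 1.

Definition batch_gain (t i : nat) : R :=
  rsum_from (fun s => expert_reward N v m s i) (batch_start m t) (t - batch_start m t).

Definition pot_before (t : nat) : R := log_sum_exp eta (batch_gain t) N.

Definition pot_after (t : nat) : R :=
  log_sum_exp eta (fun i => batch_gain t i + expert_reward N v m t i) N.

Definition hint_miss (t : nat) : R := if Req_EM_T (mprev m0 m t) (m t) then 0 else 1.

(* The slack [2 * hint_miss t] makes [target t] negative on mis-hinted rounds, where the
   highest competing bid may differ from the batch's. *)
Definition target (t : nat) : R := Rmax (v t - m t) 0 - / INR N - 2 * hint_miss t.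

Definition batch_target (t : nat) : R :=
  rsum_from target (batch_start m t) (t - batch_start m t) + target t.

Lemma INR_N_pos : 0 < INR N.
Proof. apply lt_0_INR. lia. Qed.

Lemma ln_N_div_eta_nonneg : 0 <= ln (INR N) / eta.
Proof.
  unfold Rdiv. apply Rmult_le_pos; [| left; now apply Rinv_0_lt_compat].
  rewrite <- ln_1. apply ln_le; [lra | apply (le_INR 1); exact N_pos].
Qed.

Lemma hint_miss_01 t : 0 <= hint_miss t <= 1.
Proof. unfold hint_miss. destruct Req_EM_T; lra. Qed.

Lemma hint_miss_le_switch k :
  hint_miss (S (S k)) <= INR (switches m (S (S k))) - INR (switches m (S k)).
Proof.
  rewrite switches_SS, plus_INR. unfold hint_miss, mprev. simpl Nat.eqb.
  replace (S (S k) - 1)%nat with (S k) by lia.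
  destruct Req_EM_T; destruct Req_EM_T; simpl; lra.
Qed.

Lemma aromd_exp_reward_nonneg t : 0 <= aromd_exp_reward eta N m0 v m t.
Proof.
  apply rsum_nonneg. intros i. apply Rmult_le_pos; [| apply expert_reward_nonneg].
  left. apply Rdiv_lt_0_compat; [apply exp_pos |].
  apply rsum_pos; [exact N_pos | intros; apply exp_pos].
Qed.

Lemma aromd_weight_exact_hint t i :
  mprev m0 m t = m t ->
  aromd_weight eta N m0 v m t i = exp (eta * (batch_gain t i + expert_reward N v m t i)).
Proof. intros exact_hint. unfold aromd_weight. now rewrite exact_hint. Qed.

Lemma pot_after_sub_before_le t :
  v t <= 1 -> pot_after t - pot_before t <= aromd_exp_reward eta N m0 v m t + hint_miss t.
Proof.
  intros v_le. unfold hint_miss. destruct Req_EM_T as [exact_hint | _].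
  - eapply Rle_trans; [apply log_sum_exp_shift_le_mean; assumption |].
    rewrite Rplus_0_r. right. apply rsum_ext. intros i _.
    unfold aromd_prob. rewrite (aromd_weight_exact_hint t i exact_hint).
    rewrite (rsum_ext (aromd_weight eta N m0 v m t)
               (fun j => exp (eta * (batch_gain t j + expert_reward N v m t j))));
      [reflexivity | intros j _; exact (aromd_weight_exact_hint t j exact_hint)].
  - pose proof (log_sum_exp_shift_le eta N eta_pos N_pos (batch_gain t)
                  (expert_reward N v m t) 1 (fun i => expert_reward_le_1 N v m t i v_le)).
    pose proof (aromd_exp_reward_nonneg t).
    unfold pot_after, pot_before. lra.
Qed.

Lemma pot_before_batch_start t : batch_start m t = t -> pot_before t = ln (INR N) / eta.
Proof.
  intros start. unfold pot_before, batch_gain. rewrite start, Nat.sub_diag.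
  apply log_sum_exp0.
Qed.

Lemma pot_before_same_batch t :
  batch_start m (S t) = batch_start m t -> (batch_start m t <= t)%nat ->
  pot_before (S t) = pot_after t.
Proof.
  intros same le_t. unfold pot_before, pot_after, log_sum_exp, batch_gain.
  rewrite same. do 2 f_equal. apply rsum_ext. intros i _.
  now rewrite rsum_from_extend.
Qed.

Lemma batch_target_batch_start t : batch_start m t = t -> batch_target t = target t.
Proof. intros start. unfold batch_target. rewrite start, Nat.sub_diag. simpl. ring. Qed.

Lemma batch_target_same_batch t :
  batch_start m (S t) = batch_start m t -> (batch_start m t <= t)%nat ->
  batch_target (S t) = batch_target t + target (S t).
Proof.
  intros same le_t. unfold batch_target. rewrite same, rsum_from_extend by exact le_t.
  reflexivity.
Qed.

Lemma target_le_grid_reward s i :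
  m s <= INR i / INR N <= m s + / INR N -> target s <= expert_reward N v m s i.
Proof.
  intros grid. unfold target, expert_reward, expert_bid.
  pose proof (best_sub_le_reward_min (v s) (m s) _ _ grid).
  pose proof (hint_miss_01 s). lra.
Qed.

Lemma target_le_reward_of_miss s i :
  (1 <= s <= T)%nat -> hint_miss s = 1 -> target s <= expert_reward N v m s i.
Proof.
  intros hs miss. destruct (inputs_unit s hs) as [hv hm].
  unfold target. rewrite miss.
  pose proof (expert_reward_nonneg N v m s i).
  pose proof (Rinv_0_lt_compat _ INR_N_pos).
  assert (Rmax (v s - m s) 0 <= 1) by (apply Rmax_lub; lra). lra.
Qed.

(* Witness: the grid expert bidding just above the batch's constant highest competing bid. *)
Lemma batch_target_le_pot_after t : (1 <= t <= T)%nat -> batch_target t <= pot_after t.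
Proof.
  intros ht. destruct (batch_start_spec m t ltac:(lia)) as [bounds const].
  set (a := batch_start m t) in *.
  destruct (grid_point_above N (m a) N_pos (proj2 (inputs_unit a ltac:(lia))))
    as [i [hi grid]].
  assert (last : target t <= expert_reward N v m t i).
  { destruct (Nat.eq_dec a t) as [e | ne].
    { apply target_le_grid_reward. rewrite <- e. exact grid. }
    destruct (Req_EM_T (mprev m0 m t) (m t)) as [e | miss].
    - apply target_le_grid_reward.
      unfold mprev in e. destruct (Nat.eqb_spec t 1); [lia|].
      rewrite <- e, const by lia. exact grid.
    - apply target_le_reward_of_miss; [exact ht|]. unfold hint_miss.
      destruct Req_EM_T; [contradiction | reflexivity]. }
  apply Rle_trans with (batch_gain t i + expert_reward N v m t i).
  - apply Rplus_le_compat; [| exact last].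
    apply rsum_from_le. intros s hs.
    apply target_le_grid_reward. rewrite const by lia. exact grid.
  - exact (log_sum_exp_ge eta N eta_pos
             (fun j => batch_gain t j + expert_reward N v m t j) i hi).
Qed.

(* A fresh batch costs [ln N / eta] of potential; it is paid by the switch that opened it,
   counted in [switches m (pred t)]. *)
Lemma regret_add_potential_le t :
  (1 <= t <= T)%nat ->
  aromd_expected_DR eta N m0 v m t + pot_after t - batch_target t
  <= INR t / INR N + ln (INR N) / eta * (1 + INR (switches m (pred t)))
     + 3 * (1 + INR (switches m t)).
Proof.
  set (c := ln (INR N) / eta).
  pose proof INR_N_pos as N_gt0.
  pose proof ln_N_div_eta_nonneg as c_ge0. fold c in c_ge0.
  induction t as [|t IH]; intros ht; [lia|].
  pose proof (pot_after_sub_before_le (S t) (proj2 (proj1 (inputs_unit (S t) ht)))) as round.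
  pose proof (hint_miss_01 (S t)).
  change (aromd_expected_DR eta N m0 v m (S t)) with
    (aromd_expected_DR eta N m0 v m t
     + (Rmax (v (S t) - m (S t)) 0 - aromd_exp_reward eta N m0 v m (S t))).
  destruct t as [|k].
  - rewrite pot_before_batch_start in round by reflexivity. fold c in round.
    rewrite batch_target_batch_start by reflexivity.
    unfold target. simpl (switches m _). simpl (INR _). unfold aromd_expected_DR. simpl rsum.
    unfold Rdiv. lra.
  - pose proof (IH ltac:(lia)) as IH'. simpl pred in *.
    pose proof (hint_miss_le_switch k).
    pose proof (le_INR _ _ (switches_le_S m k)).
    replace (INR (S (S k)) / INR N) with (INR (S k) / INR N + / INR N)
      by (rewrite (S_INR (S k)); field; lra).
    destruct (batch_start_SS m k) as [[new [lt ne]] | [same _]].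
    + rewrite pot_before_batch_start in round by exact new. fold c in round.
      rewrite batch_target_batch_start by exact new.
      pose proof (batch_target_le_pot_after (S k) ltac:(lia)).
      pose proof (le_INR _ _ (new_batch_switch m k lt ne)) as sw. rewrite S_INR in sw.
      assert (c * (1 + INR (switches m k)) + c <= c * (1 + INR (switches m (S k)))) by nra.
      unfold target. lra.
    + destruct (batch_start_spec m (S k) ltac:(lia)) as [bounds _].
      rewrite pot_before_same_batch in round by (exact same || lia).
      rewrite batch_target_same_batch by (exact same || lia).
      assert (c * (1 + INR (switches m k)) <= c * (1 + INR (switches m (S k)))) by nra.
      unfold target. lra.
Qed.

Lemma aromd_regret_le :
  (1 <= T)%nat ->
  aromd_expected_DR eta N m0 v m T
  <= INR T / INR N + (ln (INR N) / eta + 3) * (1 + INR (switches m T)).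
Proof.
  intros T_pos.
  pose proof (regret_add_potential_le T ltac:(lia)).
  pose proof (batch_target_le_pot_after T ltac:(lia)).
  pose proof (le_INR _ _ (switches_pred_le m T)).
  assert (ln (INR N) / eta * (1 + INR (switches m (pred T)))
          <= ln (INR N) / eta * (1 + INR (switches m T))).
  { apply Rmult_le_compat_l; [apply ln_N_div_eta_nonneg | lra]. }
  lra.
Qed.

End AROMD.

Theorem theorem2 :
  exists (eta : nat -> R) (N : nat -> nat),
    (forall T : nat, 0 < eta T /\ (1 <= N T)%nat) /\
    forall m0 : R, 0 <= m0 <= 1 ->
    forall LT : nat -> R,
      (forall T : nat, 0 <= LT T) ->
      (forall e : R, 0 < e -> exists T0 : nat, forall T : nat,
          (T0 <= T)%nat -> LT T <= e * INR T) ->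
      exists (C : R) (k : nat) (T0 : nat),
        forall T : nat, (T0 <= T)%nat ->
        forall v m : nat -> R,
          (forall t : nat, (1 <= t <= T)%nat ->
             0 <= v t <= 1 /\ 0 <= m t <= 1) ->
          INR (switches m T) <= LT T ->
          aromd_expected_DR (eta T) (N T) m0 v m T
            <= C * (ln (INR T)) ^ k * (LT T + 1).
Proof.
  exists (fun T => INR T + 1), S. split.
  { intros T. split; [pose proof (pos_INR T); lra | lia]. }
  intros m0 _ LT LT_nonneg _. exists 5, 0%nat, 0%nat.
  intros T _ v m inputs switches_le. simpl pow. rewrite Rmult_1_r.
  pose proof (LT_nonneg T).
  destruct T as [|T']; [unfold aromd_expected_DR; simpl; lra|].
  set (T := S T') in *.
  assert (T1_pos : 0 < INR T + 1) by (pose proof (pos_INR T); lra).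
  pose proof (aromd_regret_le (INR T + 1) (S T) m0 v m T T1_pos ltac:(lia) inputs ltac:(lia))
    as regret.
  rewrite S_INR in regret.
  pose proof (ln_le_sub_1 _ T1_pos).
  pose proof (Rdiv_le_1 (ln (INR T + 1)) _ T1_pos ltac:(lra)).
  pose proof (Rdiv_le_1 (INR T) _ T1_pos ltac:(lra)).
  pose proof (pos_INR (switches m T)).
  nra.
Qed.
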